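(* Call a positive integer $d$ admissible if either $d=1$, or $d$ can be written as $d=f\cdot\prod_{i=1}^{m}p_i^{2k_i}$ with $m\ge 1$, distinct primes $p_1<p_2<\dots<p_m$, integers $k_i\ge 0$, where $f=2$ if $p_1=2$ and $f=1$ if $p_1>2$, and where every $p_i$ divides $d$ (i.e. $k_i\ge 1$ for every $p_i>2$). For $d=1$ put $f=1$ and $s=1$; otherwise put $s=\prod_{i=1}^m p_i^{k_i}$ (so $d=f s^2$). Let $d$ be admissible and let $r$ be a positive integer such that (1) $r\ge \lceil \sqrt{f\,d/2}\,\rceil$, and (2) if $d>1$, then no prime divisor of $d$ divides $r$. Put $n=s\cdot r$ and $$a=2n+d=2sr+f s^2,\qquad b=2n+\frac{2n^2}{d}=2sr+\frac{2r^2}{f},\qquad c=b+d=2sr+\frac{2r^2}{f}+f s^2.$$ Then $(a,b,c)$ is an IDPT. Conversely, every IDPT $(a,b,c)$ arises in this way from some admissible $d$ and some positive integer $r$ satisfying (1) and (2) (namely with $d=c-b$).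
   Context: A Diophantine Pythagorean Triangle (DPT) is a triple $(a,b,c)$ of positive integers with $a<b<c$ and $a^2+b^2=c^2$. An Irreducible Diophantine Pythagorean Triangle (IDPT) is a DPT with $\gcd(a,b,c)=1$. $\lceil x\rceil$ denotes the smallest integer $\ge x$. *)

From mathcomp Require Import all_boot all_order all_algebra.
From mathcomp Require Import reals.
Set Implicit Arguments. Unset Strict Implicit. Unset Printing Implicit Defensive.
Import Order.TTheory GRing.Theory Num.Theory.

Definition DPT (a b c : nat) : Prop :=
  [/\ 0 < a, a < b, b < c & a ^ 2 + b ^ 2 = c ^ 2].

Definition IDPT (a b c : nat) : Prop := DPT a b c /\ gcdn (gcdn a b) c = 1.

Definition adm_rep (d f s : nat) : Prop :=
  (d = 1 /\ f = 1 /\ s = 1) \/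
  exists (m : nat) (ps ks : seq nat),
    [/\ 1 <= m, size ps = m, size ks = m, sorted ltn ps & all prime ps] /\
    [/\ (forall i, i < m -> 2 < nth 0 ps i -> 1 <= nth 0 ks i),
        f = (if nth 0 ps 0 == 2 then 2 else 1),
        d = f * \prod_(i < m) (nth 0 ps i) ^ (2 * nth 0 ks i)
      & s = \prod_(i < m) (nth 0 ps i) ^ (nth 0 ks i)].

Definition admissible (d : nat) : Prop := exists f s, adm_rep d f s.

Definition cond1 (R : realType) (f d r : nat) : Prop :=
  (Num.ceil (Num.sqrt ((f * d)%:R / 2 : R)) <= r%:Z)%R.

Definition cond2 (d r : nat) : Prop :=
  1 < d -> forall p, prime p -> p %| d -> ~~ (p %| r).

(* With d = c - b one has a^2 = d (2b + d), and gcd(a, b, c) = 1 exactly when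
   gcd(d, b) = 1.  If d is odd, d and 2b + d are then coprime, hence squares
   s^2 and t^2 with a = st, and t = s + 2r; if d is even, d/2 and b + d/2 are
   coprime squares s^2 and t^2 with a = 2st, and t = s + r.  These two cases
   are f = 1 and f = 2.  Conversely the parametrised triple is Pythagorean for
   all s and r; condition (1) says f^2 s^2 <= 2 r^2, which is a < b because
   2 r^2 is never a square, and condition (2) says gcd(d, r) = 1, which forces
   gcd(d, b) = 1. *)

From mathcomp Require Import all_boot all_order all_algebra.
From mathcomp Require Import reals.
From mathcomp Require Import zify.

Import GRing.Theory Num.Theory.

Set Implicit Arguments.
Unset Strict Implicit.
Unset Printing Implicit Defensive.

Lemma sq_neq_double_sq x y : 0 < y -> x ^ 2 != 2 * y ^ 2.
Proof.
move=> y0; apply/eqP => e.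
have x0 : 0 < x by move: y0 e; case: x => //; lia.
have /(congr1 odd) := congr1 (logn 2) e.
by rewrite lognM ?expn_gt0 ?y0 // !lognX (@logn_prime 2 2) //= !oddM.
Qed.

Lemma gcdn_sq_coprime x y z : coprime x y -> x * y = z ^ 2 -> x = gcdn x z ^ 2.
Proof.
move=> cxy e; set g := gcdn x z.
apply/eqP; rewrite eqn_dvd; apply/andP; split.
- rewrite expnS expn1 /g muln_gcdl dvdn_gcd dvdn_mulr //=.
  by rewrite muln_gcdr dvdn_gcd dvdn_mull //= mulnn -e dvdn_mulr.
- have cg : coprime (g ^ 2) y by rewrite coprimeXl // (coprime_dvdl (dvdn_gcdl _ _)).
  by rewrite -(Gauss_dvdl x cg) e dvdn_exp2r // dvdn_gcdr.
Qed.

Lemma coprime_mul_sq x y z : coprime x y -> x * y = z ^ 2 ->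
  exists s t, [/\ x = s ^ 2, y = t ^ 2 & z = s * t].
Proof.
move=> cxy e; exists (gcdn x z), (gcdn y z).
have ex := gcdn_sq_coprime cxy e.
have ey : y = gcdn y z ^ 2.
  by apply: gcdn_sq_coprime _ (etrans (mulnC y x) e); rewrite 1?coprime_sym.
split=> //; apply/eqP.
by rewrite -(eqn_exp2r _ _ (isT : 0 < 2)) expnMn -ex -ey e.
Qed.

Lemma prod_expn_double m (F G : nat -> nat) :
  \prod_(i < m) F i ^ (2 * G i) = (\prod_(i < m) F i ^ G i) ^ 2.
Proof.
rewrite expnS expn1 -big_split /=; apply: eq_bigr => i _.
by rewrite mul2n -addnn expnD.
Qed.

Lemma prod_primes_logn n s : 0 < n -> s %| n ->
  \prod_(p <- primes n) p ^ logn p s = s.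
Proof.
move=> n0 sn.
rewrite -[RHS](part_pnat_id (pnat_dvd sn (pnat_pi n0))).
by rewrite (widen_partn _ (dvdn_leq n0 sn)) -[RHS]big_filter filter_pi_of.
Qed.

Lemma adm_rep_sq f s : 0 < s -> (f = 1 /\ odd s) \/ f = 2 ->
  adm_rep (f * s ^ 2) f s.
Proof.
move=> s0 hf; have f2 : f %| 2 by case: hf => [[->]|->].
have [fs1|fs1] := leqP (f * s) 1.
  by left; case: hf => [[ef _]|ef]; subst f; [have -> : s = 1 by lia | lia].
right; set n := f * s; have n0 : 0 < n by apply: ltnW.
have m0 : 0 < size (primes n) by rewrite lt0n size_eq0 primes_eq0 -leqNgt.
have prod_s : \prod_(i < size (primes n))
    nth 0 (primes n) i ^ nth 0 [seq logn p s | p <- primes n] i = s.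
  rewrite -[RHS](prod_primes_logn n0 (dvdn_mull f (dvdnn s))).
  by rewrite (big_nth 0) big_mkord; apply: eq_bigr => i _; rewrite (nth_map 0).
exists (size (primes n)), (primes n), [seq logn p s | p <- primes n].
split; first by rewrite size_map sorted_primes all_prime_primes.
split; last 2 first.
- by rewrite prod_expn_double prod_s.
- by rewrite prod_s.
- move=> i lt_i_m p_gt2; rewrite (nth_map 0) // logn_gt0 mem_primes s0 /=.
  move: (mem_nth 0 lt_i_m); rewrite mem_primes => /and3P[pp _ p_n].
  have : nth 0 (primes n) i %| 2 * s := dvdn_trans p_n (dvdn_mul f2 (dvdnn s)).
  rewrite pp Euclid_dvdM // => /orP[/(@dvdn_leq _ 2 isT)|//]; lia.
have -> : nth 0 (primes n) 0 = pdiv n by rewrite /pdiv; case: (primes n) m0.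
case: hf => [[ef os]|ef]; subst f.
- case: eqP => // p2; have := pdiv_dvd n.
  by rewrite p2 /n mul1n dvdn2 os.
- suff -> : pdiv n = 2 by [].
  apply/eqP; rewrite eqn_leq pdiv_min_dvd ?dvdn_mulr //.
  by rewrite prime_gt1 ?pdiv_prime.
Qed.

Lemma adm_repP d f s : adm_rep d f s <->
  [/\ d = f * s ^ 2, 0 < s & (f = 1 /\ odd s) \/ f = 2].
Proof.
split; last by case=> -> s0 hf; apply: adm_rep_sq.
case=> [[-> [-> ->]] | [m [ps [ks [[m0 hsz _ hsort hpr] [_ hf hd hs]]]]]].
  by split=> //; left.
have prm i : i < m -> prime (nth 0 ps i).
  by move=> im; apply: (allP hpr); rewrite mem_nth // hsz.
have s0 : 0 < s.
  by rewrite hs; apply: prodn_gt0 => i; rewrite expn_gt0 prime_gt0 ?prm.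
split=> //; first by rewrite hd hs prod_expn_double.
case: eqP hf => [_ ->|p0_neq2 ->]; [by right | left; split=> //].
have p_odd i : i < m -> odd (nth 0 ps i).
  move=> im; case: (even_prime (prm i im)) => // p2.
  case: i im p2 => [|i] im p2; first by rewrite p2 in p0_neq2.
  have := sorted_ltn_nth ltn_trans 0 hsort 0 i.+1.
  rewrite !inE hsz p2 => /(_ m0 im isT).
  by have := prime_gt1 (prm 0 m0); lia.
rewrite hs; apply: (big_ind odd) => // [x y ox oy | i _].
  by rewrite oddM ox oy.
by rewrite oddX p_odd ?orbT.
Qed.

Lemma cond1P (R : realType) f d r : cond1 R f d r <-> f * d <= 2 * r ^ 2.
Proof.
rewrite /cond1 ceil_le_int.
have -> : (r%:Z%:~R = Num.sqrt (r%:R ^+ 2) :> R)%R by rewrite sqrtr_sqr ger0_norm.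
rewrite ler_sqrt ?exprn_ge0 // ler_pdivrMr // -natrX -natrM ler_nat.
by rewrite [(r ^ 2 * 2)%N]mulnC.
Qed.

Lemma cond2P d r : 0 < d -> 0 < r -> cond2 d r <-> coprime d r.
Proof.
move=> d0 r0; have [d_le1|d1] := leqP d 1.
  have -> : d = 1 by lia.
  by rewrite coprime1n; split=> // _; rewrite ltnn.
rewrite coprime_has_primes //; split=> [h | /hasPn h _ p pp pd].
  apply/hasPn => p; rewrite !mem_primes d0 r0 /= => /andP[pp pr].
  by apply/negP => /andP[_ /(h d1 p pp)/negP].
apply/negP => pr; have := h p.
by rewrite !mem_primes pp d0 r0 pd pr => /(_ isT).
Qed.

Lemma pyth_primitiveE a b d : a ^ 2 + b ^ 2 = (b + d) ^ 2 ->
  (gcdn (gcdn a b) (b + d) == 1) = coprime d b.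
Proof.
move=> e; have ea : a ^ 2 = d * (2 * b + d) by nia.
apply/eqP/idP => [g1 | cdb].
- rewrite /coprime -dvdn1 -g1 !dvdn_gcd dvdn_gcdr dvdn_addr ?dvdn_gcdl ?dvdn_gcdr //.
  rewrite -(@dvdn_pexp2r _ _ 2) // ea expnS expn1.
  by rewrite dvdn_mul ?dvdn_gcdl // dvdn_add ?dvdn_gcdl // dvdn_mull ?dvdn_gcdr.
- apply/eqP; rewrite -dvdn1 -(eqP cdb).
  have gb : gcdn (gcdn a b) (b + d) %| b := dvdn_trans (dvdn_gcdl _ _) (dvdn_gcdr _ _).
  by rewrite dvdn_gcd gb -(dvdn_addr _ gb) dvdn_gcdr.
Qed.

Lemma pyth_param_eq f s r q : q * f = 2 * r ^ 2 ->
  (2 * s * r + f * s ^ 2) ^ 2 + (2 * s * r + q) ^ 2 = (2 * s * r + q + f * s ^ 2) ^ 2.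
Proof. by move=> e; nia. Qed.

Lemma coprime_param f s r : (f = 1 /\ odd s) \/ f = 2 -> coprime (f * s ^ 2) r ->
  coprime (f * s ^ 2) (2 * s * r + 2 * r ^ 2 %/ f).
Proof.
case=> [[-> os]|->]; rewrite ?divn1 ?mulKn // => cop.
- have -> : 2 * s * r + 2 * r ^ 2 = 2 * (r * (s + r)) by lia.
  move: cop; rewrite mul1n !coprimeMr !coprime_pexpl // coprimen2 os.
  by rewrite /coprime gcdnDl => ->.
- have -> : 2 * s * r + r ^ 2 = r * (2 * s + r) by lia.
  rewrite coprimeMr cop; apply: (@coprime_dvdl _ ((2 * s) ^ 2)).
    by rewrite expnMn dvdn_mul.
  rewrite coprime_pexpl // /coprime gcdnDl.
  by apply: coprime_dvdl cop; rewrite -mulnn mulnA dvdn_mulr.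
Qed.

Lemma IDPT_param d f s r :
  adm_rep d f s -> 0 < r -> f * d <= 2 * r ^ 2 -> cond2 d r ->
  IDPT (2 * s * r + f * s ^ 2)
       (2 * s * r + 2 * r ^ 2 %/ f)
       (2 * s * r + 2 * r ^ 2 %/ f + f * s ^ 2).
Proof.
case/adm_repP => -> s0 hf r0 le_fd h2.
have f0 : 0 < f by case: hf => [[->]|->].
have d0 : 0 < f * s ^ 2 by rewrite muln_gt0 f0 expn_gt0 s0.
have f2r : f %| 2 * r ^ 2 by apply: dvdn_mulr; case: hf => [[->]|->].
have lt_fd : f * s ^ 2 * f < 2 * r ^ 2.
  rewrite ltn_neqAle mulnC le_fd andbT.
  have -> : f * (f * s ^ 2) = (f * s) ^ 2 by lia.
  exact: sq_neq_double_sq.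
split; [split|].
- by rewrite addn_gt0 d0 orbT.
- by rewrite ltn_add2l ltn_divRL.
- by rewrite -[X in X < _]addn0 ltn_add2l.
- exact: pyth_param_eq (divnK f2r).
apply/eqP; rewrite pyth_primitiveE; last exact: pyth_param_eq (divnK f2r).
by apply: coprime_param => //; apply/cond2P.
Qed.

Lemma pyth_gap_odd a b d : 0 < b -> a ^ 2 + b ^ 2 = (b + d) ^ 2 ->
    coprime d b -> odd d ->
  exists s r, [/\ odd s, 0 < r, d = s ^ 2, a = 2 * s * r + s ^ 2
                & b = 2 * s * r + 2 * r ^ 2].
Proof.
move=> b0 e cdb od.
have cop : coprime d (2 * b + d).
  by rewrite /coprime gcdnDr -/(coprime d _) coprimeMr coprimen2 od cdb.
have [s [t [ds et ea]]] : exists s t, [/\ d = s ^ 2, 2 * b + d = t ^ 2 & a = s * t].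
  by apply: coprime_mul_sq cop _; nia.
subst d a; have os : odd s by move: od; rewrite oddX.
have ot : odd t by have := congr1 odd et; rewrite oddD oddM !oddX /= os => <-.
have st : s < t by rewrite -(@ltn_exp2r _ _ 2) // -et; lia.
have /dvdnP[r er] : 2 %| t - s by rewrite dvdn2 oddB ?ot ?os // ltnW.
have {er} et' : t = s + 2 * r by lia.
by subst t; exists s, r; split=> //; lia.
Qed.

Lemma pyth_gap_even a b d : 0 < b -> a ^ 2 + b ^ 2 = (b + d) ^ 2 ->
    coprime d b -> ~~ odd d ->
  exists s r, [/\ 0 < r, d = 2 * s ^ 2, a = 2 * s * r + 2 * s ^ 2
                & b = 2 * s * r + r ^ 2].
Proof.
move=> b0 e cdb ed.
have /dvdnP[h dh] : 2 %| d by rewrite dvdn2.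
subst d; have ea2 : a ^ 2 = 2 ^ 2 * (h * (b + h)) by lia.
have /dvdnP[a' ea] : 2 %| a by rewrite -(@dvdn_pexp2r _ _ 2) // ea2 dvdn_mulr.
have cop : coprime h (b + h).
  by rewrite /coprime gcdnDr; apply: coprime_dvdl cdb; rewrite dvdn_mulr.
have [s [t [hs ht ea']]] : exists s t, [/\ h = s ^ 2, b + h = t ^ 2 & a' = s * t].
  by apply: coprime_mul_sq cop _; subst a; lia.
have st : s < t by rewrite -(@ltn_exp2r _ _ 2) // -hs -ht; lia.
have [r et] : exists r, t = s + r by exists (t - s); lia.
subst; clear e ea2 cop cdb; exists s, r; split=> //; lia.
Qed.

Lemma pyth_gap_param a b d : 0 < b -> a ^ 2 + b ^ 2 = (b + d) ^ 2 -> coprime d b ->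
  exists f s r, [/\ (f = 1 /\ odd s) \/ f = 2, 0 < r, d = f * s ^ 2,
                    a = 2 * s * r + f * s ^ 2 & b = 2 * s * r + 2 * r ^ 2 %/ f].
Proof.
move=> b0 e cdb; case: (boolP (odd d)) => [od | ev].
- have [s [r [os r0 -> -> ->]]] := pyth_gap_odd b0 e cdb od.
  by exists 1, s, r; rewrite mul1n divn1; split=> //; left.
- have [s [r [r0 -> -> ->]]] := pyth_gap_even b0 e cdb ev.
  by exists 2, s, r; rewrite mulKn //; split=> //; right.
Qed.

Lemma IDPT_paramP a b c : IDPT a b c ->
  exists f s r : nat,
    [/\ adm_rep (c - b) f s, 0 < r, f * (c - b) <= 2 * r ^ 2, cond2 (c - b) r
      & [/\ a = 2 * s * r + f * s ^ 2,
            b = 2 * s * r + 2 * r ^ 2 %/ f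
          & c = 2 * s * r + 2 * r ^ 2 %/ f + f * s ^ 2]].
Proof.
case=> [[a0 ab bc e] g1].
have [d ec] : exists d, c = b + d by exists (c - b); lia.
subst c; rewrite addKn; have d0 : 0 < d by lia.
have cdb : coprime d b by rewrite -(pyth_primitiveE e) g1.
have [f [s [r [hf r0 ed ea eb]]]] := pyth_gap_param (ltn_trans a0 ab) e cdb.
have f2r : f %| 2 * r ^ 2 by apply: dvdn_mulr; case: hf => [[->]|->].
have s0 : 0 < s by move: d0; rewrite ed muln_gt0 expn_gt0 orbF => /andP[].
have r_b : r %| b.
  rewrite eb dvdn_add ?dvdn_mull //.
  by case: hf => [[->]|->]; rewrite ?divn1 ?mulKn // ?dvdn_mull // -mulnn dvdn_mulr.
exists f, s, r; split=> //.
- by apply/adm_repP; rewrite ed.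
- by move: ab; rewrite ea eb ltn_add2l ltn_divRL // ed mulnC => /ltnW.
- by apply/cond2P => //; apply: coprime_dvdr cdb.
- by rewrite -ea -eb ed.
Qed.

Theorem theorem5 (R : realType) :
  (forall d f s r : nat,
      adm_rep d f s -> 0 < r -> cond1 R f d r -> cond2 d r ->
      IDPT (2 * s * r + f * s ^ 2)
           (2 * s * r + (2 * r ^ 2) %/ f)
           (2 * s * r + (2 * r ^ 2) %/ f + f * s ^ 2)) /\
  (forall a b c : nat, IDPT a b c ->
      exists f s r : nat,
        [/\ adm_rep (c - b) f s, 0 < r, cond1 R f (c - b) r, cond2 (c - b) r
          & [/\ a = 2 * s * r + f * s ^ 2,
                b = 2 * s * r + (2 * r ^ 2) %/ f
              & c = 2 * s * r + (2 * r ^ 2) %/ f + f * s ^ 2]]).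
Proof.
split=> [d f s r adm r0 /cond1P | a b c /IDPT_paramP [f [s [r [? ? /cond1P ? ? ?]]]]].
  exact: IDPT_param.
by exists f, s, r.
Qed.
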